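(* Let $\Psi$ be proper closed convex, $F=\frac1n\sum_{i=1}^nF_i$ with $F_i(x)=\mathbb{E}_{\xi_i\sim\mathcal{D}_i}[F_{\xi_i}(x)]$, and $x^*$ a solution of $\langle F(x^* ),x-x^*\rangle+\Psi(x)-\Psi(x^* )\ge0$ for all $x$. Let $K\ge0$, $\beta\in(0,1]$, $0<\gamma\le1/\ell$, $V\ge\|x^0-x^*\|^2+\frac{25600\gamma^2\ln^2\frac{48n(K+1)}{\beta}}{n^2}\sum_{i=1}^n\|F_i(x^* )\|^2$, $Q=B_{3\sqrt V}(x^* )$, and assume: $F$ is monotone on $Q$; for every solution $x^*$, $\|F_i(x)-F_i(x^* )\|^2\le\ell\langle F_i(x)-F_i(x^* ),x-x^*\rangle$ for $x\in Q$, $i\in[n]$; and $\|F(x)-F(y)\|^2\le\ell\langle F(x)-F(y),x-y\rangle$ for $x,y\in Q$. Consider DProx-clipped-SGDA-shift (arbitrary $h_i^0,\nu,\lambda_k$). If $x^k\in B_{3\sqrt V}(x^* )$ for all $k=0,1,\dots,K-1$, then for all $u\in B_{3\sqrt V}(x^* )$ $$\langle F(u),x^K_{\mathrm{avg}}-u\rangle+\Psi(x^K_{\mathrm{avg}})-\Psi(u)\le\frac{\|x^0-u\|^2-\|x^K-u\|^2}{2\gamma K}+\frac\gamma K\sum_{k=0}^{K-1}\|\omega_k\|^2+\frac1K\sum_{k=0}^{K-1}\langle x^k-u,\omega_k\rangle,$$ where $x^K_{\mathrm{avg}}=\frac1K\sum_{k=0}^{K-1}x^{k+1}$ and $\omega_k=F(x^k)-\tilde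 g^k$.
   Context: $\mathrm{prox}_{\gamma\Psi}(x)=\arg\min_y\{\gamma\Psi(y)+\frac12\|y-x\|^2\}$; $\mathrm{clip}(y,\lambda)=\min\{1,\lambda/\|y\|\}y$ ($\mathrm{clip}(0,\lambda)=0$). DProx-clipped-SGDA-shift: $x^{k+1}=\mathrm{prox}_{\gamma\Psi}(x^k-\gamma\tilde g^k)$, $\tilde g^k=\frac1n\sum_i\tilde g_i^k$, $\tilde g_i^k=h_i^k+\hat\Delta_i^k$, $h_i^{k+1}=h_i^k+\nu\hat\Delta_i^k$, $\hat\Delta_i^k=\mathrm{clip}(F_{\xi_i^k}(x^k)-h_i^k,\lambda_k)$, with $\xi_i^k$ sampled independently. *)

From HB Require Import structures.
From mathcomp Require Import all_boot all_order all_algebra.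
From mathcomp Require Import all_classical all_reals all_analysis.
Set Implicit Arguments. Unset Strict Implicit. Unset Printing Implicit Defensive.
Import Order.TTheory GRing.Theory Num.Theory.
Import numFieldNormedType.Exports.
Local Open Scope classical_set_scope.
Local Open Scope ring_scope.

Section Defs.
Variables (R : realType) (d : nat).
Notation vec := 'rV[R]_d.

Definition dotp (u v : vec) : R := \sum_(j < d) u 0 j * v 0 j.
Definition sqnorm (u : vec) : R := dotp u u.
Definition enorm (u : vec) : R := Num.sqrt (sqnorm u).

Definition ball_E (c : vec) (r : R) : set vec := [set x | enorm (x - c) <= r].

Definition clip (y : vec) (lam : R) : vec :=
  if y == 0 then 0 else (Num.min 1 (lam / enorm y)) *: y.

Definition proper_fun (Psi : vec -> \bar R) : Prop :=
  (forall x, Psi x != -oo%E) /\ (exists x, Psi x \is a fin_num).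
Definition convex_fun (Psi : vec -> \bar R) : Prop :=
  forall (x y : vec) (t : R), 0 < t < 1 ->
    (Psi (t *: x + (1 - t) *: y)%R <= t%:E * Psi x + (1 - t)%:E * Psi y)%E.
(* closed = lower semicontinuous = all sublevel sets closed *)
Definition closed_fun (Psi : vec -> \bar R) : Prop :=
  forall a : R, closed [set x : vec | (Psi x <= a%:E)%E].

Definition is_prox (gamma : R) (Psi : vec -> \bar R) (z p : vec) : Prop :=
  forall y : vec,
    (gamma%:E * Psi p + (sqnorm (p - z) / 2)%:E
       <= gamma%:E * Psi y + (sqnorm (y - z) / 2)%:E)%E.

End Defs.

Section Alg.
Variables (R : realType) (d n : nat) (d0 : measure_display) (T : measurableType d0).
Notation vec := 'rV[R]_d.

Definition avg_op (Fi : 'I_n -> vec -> vec) (x : vec) : vec :=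
  n%:R^-1 *: \sum_(i < n) Fi i x.

Definition is_VI_solution (F : vec -> vec) (Psi : vec -> \bar R) (xs : vec) : Prop :=
  forall x : vec, (0 <= (dotp (F xs) (x - xs))%:E + Psi x - Psi xs)%E.

(* DProx-clipped-SGDA-shift quantities, for a realization xi of the samples;
   Fxi i s x = F_{xi_i}(x) for sample s of worker i *)
Definition Delta_hat (Fxi : 'I_n -> T -> vec -> vec) (xi : nat -> 'I_n -> T)
  (x : nat -> vec) (h : nat -> 'I_n -> vec) (lam : nat -> R) (k : nat) (i : 'I_n) : vec :=
  clip (Fxi i (xi k i) (x k) - h k i) (lam k).
Definition g_tilde (Fxi : 'I_n -> T -> vec -> vec) (xi : nat -> 'I_n -> T)
  (x : nat -> vec) (h : nat -> 'I_n -> vec) (lam : nat -> R) (k : nat) : vec :=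
  n%:R^-1 *: \sum_(i < n) (h k i + Delta_hat Fxi xi x h lam k i).

Definition DProx_clipped_SGDA_shift (gamma nu : R) (Psi : vec -> \bar R)
  (Fxi : 'I_n -> T -> vec -> vec) (xi : nat -> 'I_n -> T)
  (x : nat -> vec) (h : nat -> 'I_n -> vec) (lam : nat -> R) : Prop :=
  (forall k i, h k.+1 i = h k i + nu *: Delta_hat Fxi xi x h lam k i) /\
  (forall k, is_prox gamma Psi (x k - gamma *: g_tilde Fxi xi x h lam k) (x k.+1)).

End Alg.

(* Every step is a prox step, so optimality of x^{k+1} in the prox subproblem gives a
   variational inequality against any u.  Combined with the three-point identity, Young's
   inequality and the cocoercivity of F between x^k and u, it bounds the gap
   <F(u), x^{k+1} - u> + Psi(x^{k+1}) - Psi(u) by a telescoping term in |x^k - u|^2 plus the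
   error terms in omega_k = F(x^k) - g_tilde^k.  Averaging over k and Jensen's inequality for the
   convex Psi at x^K_avg give the claim. *)

From HB Require Import structures.
From mathcomp Require Import all_boot all_order all_algebra.
From mathcomp Require Import all_classical all_reals all_analysis.
From mathcomp Require Import ring lra.
Set Implicit Arguments. Unset Strict Implicit. Unset Printing Implicit Defensive.
Import Order.TTheory GRing.Theory Num.Theory.
Import numFieldNormedType.Exports.
Local Open Scope classical_set_scope.
Local Open Scope ring_scope.

Section Dotp.
Variables (R : realType) (d : nat).
Notation vec := 'rV[R]_d.
Implicit Types (u v w : vec).

Lemma dotpC u v : dotp u v = dotp v u.
Proof. by apply: eq_bigr => j _; rewrite mulrC. Qed.

Lemma dotpDl u v w : dotp (u + v) w = dotp u w + dotp v w.
Proof. by rewrite /dotp -big_split /=; apply: eq_bigr => j _; rewrite mxE mulrDl. Qed.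

Lemma dotpZl a u v : dotp (a *: u) v = a * dotp u v.
Proof. by rewrite /dotp mulr_sumr; apply: eq_bigr => j _; rewrite mxE mulrA. Qed.

Lemma dotpNl u v : dotp (- u) v = - dotp u v.
Proof. by rewrite -scaleN1r dotpZl mulN1r. Qed.

Lemma dotpDr u v w : dotp u (v + w) = dotp u v + dotp u w.
Proof. by rewrite dotpC dotpDl !(dotpC u). Qed.

Lemma dotpZr a u v : dotp u (a *: v) = a * dotp u v.
Proof. by rewrite dotpC dotpZl dotpC. Qed.

Lemma dotpNr u v : dotp u (- v) = - dotp u v.
Proof. by rewrite dotpC dotpNl dotpC. Qed.

Lemma dotp_sumr m (f : 'I_m -> vec) u :
  dotp u (\sum_(i < m) f i) = \sum_(i < m) dotp u (f i).
Proof.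
apply: (big_morph (dotp u) (dotpDr u)).
by rewrite /dotp big1 // => j _; rewrite mxE mulr0.
Qed.

Lemma sqnorm_ge0 u : 0 <= sqnorm u.
Proof. by apply: sumr_ge0 => j _; rewrite -expr2 sqr_ge0. Qed.

Lemma sqnormD u v : sqnorm (u + v) = sqnorm u + 2 * dotp u v + sqnorm v.
Proof. by rewrite /sqnorm dotpDl !dotpDr (dotpC v u); ring. Qed.

Lemma sqnormN u : sqnorm (- u) = sqnorm u.
Proof. by rewrite /sqnorm dotpNl dotpNr opprK. Qed.

Lemma sqnormZ a u : sqnorm (a *: u) = a ^+ 2 * sqnorm u.
Proof. by rewrite /sqnorm dotpZl dotpZr mulrA expr2. Qed.

Lemma dotp_young (c : R) u v : c * dotp u v <= c ^+ 2 * sqnorm u + sqnorm v / 4.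
Proof.
have := sqnorm_ge0 (c *: u - 2^-1 *: v).
rewrite sqnormD sqnormN !sqnormZ dotpNr dotpZl dotpZr.
lra.
Qed.

Lemma dotp_three_point a b u :
  2 * dotp (b - a) (u - b) = sqnorm (a - u) - sqnorm (b - u) - sqnorm (b - a).
Proof.
have -> : b - u = (b - a) + (a - u) by rewrite addrA subrK.
have -> : u - b = - ((b - a) + (a - u)) by rewrite addrA subrK opprB.
move: (b - a) (a - u) => p q.
by rewrite sqnormD dotpNr dotpDr /sqnorm; ring.
Qed.

End Dotp.

Lemma le_of_forall_le_addM (R : realFieldType) (a b M : R) : 0 <= M ->
  (forall t, 0 < t < 1 -> a <= b + t * M) -> a <= b.
Proof.
move=> M0 H; apply/ler_addgt0Pr => e e0.
pose t := e / (e + M + 1).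
have den : 0 < e + M + 1 by lra.
have t0 : 0 < t by rewrite divr_gt0.
have t1 : t < 1 by rewrite ltr_pdivrMr // mul1r; lra.
have tM : t * M <= e.
  by rewrite mulrAC ler_pdivrMr // ler_wpM2l ?ltW //; lra.
by apply: (le_trans (H t _)); [rewrite t0 t1 | rewrite lerD2l].
Qed.

Section Prox.
Variables (R : realType) (d : nat).
Notation vec := 'rV[R]_d.
Variables (gamma : R) (Psi : vec -> \bar R).
Hypothesis gamma_gt0 : 0 < gamma.

Lemma is_prox_fin_num z p : proper_fun Psi -> is_prox gamma Psi z p ->
  Psi p \is a fin_num.
Proof.
move=> [Psi_gtNy [y Psi_y]] /(_ y).
case: (Psi p) (Psi_gtNy p) => [a _ _ //| _ | //].
by rewrite gt0_muley ?lte_fin //; case: (Psi y) Psi_y.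
Qed.

(* First-order optimality of the prox, obtained by comparing p with p + t (u - p)
   and letting t -> 0. *)
Lemma is_prox_ineq z p u (a b : R) : convex_fun Psi -> is_prox gamma Psi z p ->
  Psi p = a%:E -> Psi u = b%:E -> gamma * (a - b) <= dotp (p - z) (u - p).
Proof.
move=> cvx prox Pa Pb.
apply: (@le_of_forall_le_addM _ _ _ (sqnorm (u - p) / 2)).
  by rewrite divr_ge0 ?sqnorm_ge0.
move=> t /andP[t0 t1].
have ey : t *: u + (1 - t) *: p - z = (p - z) + t *: (u - p).
  by rewrite scalerBr scalerBl scale1r addrCA addrAC.
have := le_trans (prox (t *: u + (1 - t) *: p))
  (leeD2r _ (lee_wpmul2l (ltW gamma_gt0 : (0 <= gamma%:E)%E) (cvx u p t _))).
rewrite t0 t1 Pa Pb ey => /(_ isT).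
move: (p - z) (u - p) => P Q.
rewrite sqnormD sqnormZ dotpZr -!EFinM -!EFinD lee_fin => H.
by rewrite -(ler_pM2l t0); lra.
Qed.

End Prox.

(* With f = F(a) - F(u) and omega = F(a) - g, the terms gamma <f, a - b> and gamma <omega, b - a>
   are absorbed by the -|b - a|^2 / 2 of the three-point identity (Young), and gamma^2 |f|^2 by
   -gamma <f, a - u> (cocoercivity). *)
Lemma prox_step_gap_le (R : realType) (d : nat) (gamma ell psi_b psi_u : R)
    (Fa Fu g a b u : 'rV[R]_d) :
  0 < gamma -> 0 < ell -> gamma * ell <= 1 ->
  gamma * (psi_b - psi_u) <= dotp (b - (a - gamma *: g)) (u - b) ->
  sqnorm (Fa - Fu) <= ell * dotp (Fa - Fu) (a - u) ->
  dotp Fu (b - u) + psi_b - psi_u <=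
    (sqnorm (a - u) - sqnorm (b - u)) / (2 * gamma)
    + gamma * sqnorm (Fa - g) + dotp (a - u) (Fa - g).
Proof.
move=> g0 l0 gl1 prox coco.
have three := dotp_three_point a b u.
have decomp : dotp (b - (a - gamma *: g)) (u - b) + gamma * dotp Fu (b - u) =
    dotp (b - a) (u - b) - gamma * dotp (Fa - Fu) (a - u)
    - gamma * dotp (Fa - Fu) (b - a)
    + gamma * dotp (Fa - g) (a - u) + gamma * dotp (Fa - g) (b - a).
  have -> : b - (a - gamma *: g) = (b - a) + gamma *: (Fu + (Fa - Fu) - (Fa - g)).
    by apply/rowP => j; rewrite !mxE; ring.
  have -> : b - u = (b - a) + (a - u) by rewrite addrA subrK.
  have -> : u - b = - ((b - a) + (a - u)) by rewrite addrA subrK opprB.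
  move: (b - a) (a - u) (Fa - Fu) (Fa - g) => s e f w.
  by rewrite !(dotpDl, dotpDr, dotpZl, dotpNl, dotpNr); ring.
have young_w := dotp_young gamma (Fa - g) (b - a).
have young_f := dotp_young (- gamma) (Fa - Fu) (b - a).
have coco_f : gamma ^+ 2 * sqnorm (Fa - Fu) <= gamma * dotp (Fa - Fu) (a - u).
  have mono : 0 <= dotp (Fa - Fu) (a - u).
    by rewrite -(pmulr_rge0 _ l0); apply: le_trans coco; exact: sqnorm_ge0.
  apply: (le_trans (ler_wpM2l (sqr_ge0 gamma) coco)).
  have := mulr_ge0 (ltW g0) mono; rewrite expr2; nra.
rewrite -(ler_pM2l g0) (dotpC (a - u)).
have -> : gamma * ((sqnorm (a - u) - sqnorm (b - u)) / (2 * gamma)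
    + gamma * sqnorm (Fa - g) + dotp (Fa - g) (a - u)) =
    (sqnorm (a - u) - sqnorm (b - u)) / 2 + gamma ^+ 2 * sqnorm (Fa - g)
    + gamma * dotp (Fa - g) (a - u).
  by field; rewrite gt_eqF.
rewrite sqrrN in young_f.
lra.
Qed.

Lemma convex_fun_mean (R : realType) (d : nat) (Psi : 'rV[R]_d -> \bar R)
    (y : nat -> 'rV[R]_d) (c : nat -> R) :
  convex_fun Psi -> (forall k, (Psi (y k) <= (c k)%:E)%E) ->
  forall m, (0 < m)%N ->
  (Psi (m%:R^-1 *: \sum_(k < m) y k) <= (m%:R^-1 * \sum_(k < m) c k)%:E)%E.
Proof.
move=> cvx Psi_y; elim=> [//|[|m] IH] _.
  by rewrite !big_ord1 invr1 scale1r mul1r.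
pose t : R := m.+1%:R / m.+2%:R.
have m2 : (m.+2%:R : R) != 0 by rewrite pnatr_eq0.
have t0 : 0 < t by rewrite divr_gt0.
have t1 : t < 1 by rewrite ltr_pdivrMr ?ltr0n // mul1r ltr_nat.
have tm : t * m.+1%:R^-1 = m.+2%:R^-1 by rewrite mulrAC divff ?mul1r ?pnatr_eq0.
have t1m : 1 - t = m.+2%:R^-1.
  by rewrite /t; field.
have -> : m.+2%:R^-1 *: \sum_(k < m.+2) y k =
    t *: (m.+1%:R^-1 *: \sum_(k < m.+1) y k) + (1 - t) *: y m.+1.
  by rewrite big_ord_recr /= scalerA tm t1m scalerDr.
apply: (le_trans (cvx _ _ t _)); first by rewrite t0 t1.
apply: le_trans (leeD (lee_wpmul2l _ (IH isT)) (lee_wpmul2l _ (Psi_y m.+1))) _.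
- by rewrite lee_fin ltW.
- by rewrite lee_fin subr_ge0 ltW.
by rewrite -!EFinM -EFinD lee_fin [in leRHS]big_ord_recr /= mulrDr mulrA tm t1m.
Qed.

Lemma mean_telescope_le (R : realFieldType) (K : nat) (c e gamma : R)
    (a D s w : nat -> R) : (0 < K)%N ->
  (forall k, (k < K)%N -> a k - c <= (D k - D k.+1) / e + gamma * s k + w k) ->
  K%:R^-1 * \sum_(k < K) a k - c <=
    (D 0%N - D K) / (e * K%:R) + gamma / K%:R * \sum_(k < K) s k
    + K%:R^-1 * \sum_(k < K) w k.
Proof.
move=> K0 le_step.
have K_neq0 : (K%:R : R) != 0 by rewrite pnatr_eq0 -lt0n.
have tele : \sum_(k < K) (D k - D k.+1) = D 0%N - D K.
  rewrite -(big_mkord xpredT (fun k => D k - D k.+1)).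
  rewrite (telescope_sumr_eq (fun k => - D k)) ?opprK 1?addrC // => k _.
  by rewrite opprK addrC.
have K1_ge0 : 0 <= K%:R^-1 :> R by rewrite invr_ge0 ler0n.
have : \sum_(k < K) (a k - c) <= \sum_(k < K) ((D k - D k.+1) / e + gamma * s k + w k).
  by apply: ler_sum => k _; exact: le_step.
move/(ler_wpM2l K1_ge0).
rewrite sumrB sumr_const card_ord !big_split /= -mulr_suml -mulr_sumr tele.
have -> : K%:R^-1 * (\sum_(k < K) a k - c *+ K) = K%:R^-1 * \sum_(k < K) a k - c.
  by rewrite -mulr_natr; field.
by rewrite invfM; lra.
Qed.

Lemma mean_subr (R : numFieldType) (V : lmodType R) (K : nat) (v : nat -> V) (u : V) :
  (0 < K)%N -> K%:R^-1 *: \sum_(k < K) v k - u = K%:R^-1 *: \sum_(k < K) (v k - u).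
Proof.
move=> K0; rewrite sumrB sumr_const card_ord scalerBr -[u *+ K]scaler_nat scalerA.
by rewrite mulVf ?scale1r // pnatr_eq0 -lt0n.
Qed.

Theorem lemmaG1 (R : realType) (d n : nat) (d0 : measure_display)
  (T : measurableType d0) (D : 'I_n -> probability T R)
  (Fxi : 'I_n -> T -> 'rV[R]_d -> 'rV[R]_d) (Fi : 'I_n -> 'rV[R]_d -> 'rV[R]_d)
  (Psi : 'rV[R]_d -> \bar R) (xs : 'rV[R]_d)
  (K : nat) (beta gamma ell V nu : R)
  (x : nat -> 'rV[R]_d) (h : nat -> 'I_n -> 'rV[R]_d) (lam : nat -> R)
  (xi : nat -> 'I_n -> T) :
  (0 < n)%N ->
  proper_fun Psi -> closed_fun Psi -> convex_fun Psi ->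
  (* F_i(x) = E_{xi_i ~ D_i}[F_{xi_i}(x)], componentwise *)
  (forall i y (j : 'I_d), (D i).-integrable setT (fun s => (Fxi i s y 0 j)%:E)) ->
  (forall i y (j : 'I_d), (Fi i y 0 j)%:E = (\int[D i]_s (Fxi i s y 0 j)%:E)%E) ->
  is_VI_solution (avg_op Fi) Psi xs ->
  (0 < K)%N ->
  0 < beta <= 1 ->
  0 < ell -> 0 < gamma <= ell^-1 ->
  sqnorm (x 0%N - xs)
    + (25600%:R : R) * gamma ^+ 2 * (ln ((48%:R : R) * n%:R * K.+1%:R / beta)) ^+ 2 / n%:R ^+ 2
      * \sum_(i < n) sqnorm (Fi i xs) <= V ->
  (* F monotone on Q = B_{3 sqrt V}(x* ) *)
  (forall y z, ball_E xs (3 * Num.sqrt V) y -> ball_E xs (3 * Num.sqrt V) z ->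
     0 <= dotp (avg_op Fi y - avg_op Fi z) (y - z)) ->
  (* star-cocoercivity of each F_i on Q, around every solution *)
  (forall xs', is_VI_solution (avg_op Fi) Psi xs' ->
     forall y, ball_E xs (3 * Num.sqrt V) y -> forall i,
       sqnorm (Fi i y - Fi i xs') <= ell * dotp (Fi i y - Fi i xs') (y - xs')) ->
  (* cocoercivity of F on Q *)
  (forall y z, ball_E xs (3 * Num.sqrt V) y -> ball_E xs (3 * Num.sqrt V) z ->
     sqnorm (avg_op Fi y - avg_op Fi z)
       <= ell * dotp (avg_op Fi y - avg_op Fi z) (y - z)) ->
  DProx_clipped_SGDA_shift gamma nu Psi Fxi xi x h lam ->
  (forall k, (k < K)%N -> ball_E xs (3 * Num.sqrt V) (x k)) ->
  forall u, ball_E xs (3 * Num.sqrt V) u ->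
  let xavg := K%:R^-1 *: \sum_(k < K) x k.+1 in
  let omega := fun k => avg_op Fi (x k) - g_tilde Fxi xi x h lam k in
  ((dotp (avg_op Fi u) (xavg - u))%:E + Psi xavg - Psi u
    <= ((sqnorm (x 0%N - u) - sqnorm (x K - u)) / (2 * gamma * K%:R)
        + gamma / K%:R * \sum_(k < K) sqnorm (omega k)
        + K%:R^-1 * \sum_(k < K) dotp (x k - u) (omega k))%:E)%E.
Proof.
(* The bound holds for every realization of the samples and any shifts and clipping levels. *)
move=> _ proper _ cvx _ _ _ K0 _ l0 /andP[g0 gl] _ _ _ coco [_ prox] x_in u u_in.
cbv zeta; set xavg := K%:R^-1 *: \sum_(k < K) x k.+1.
have gl1 : gamma * ell <= 1 by rewrite -(ler_pdivlMr _ _ l0) div1r.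
pose psi k := fine (Psi (x k.+1)).
have Psi_psi k : Psi (x k.+1) = (psi k)%:E.
  by rewrite fineK // (is_prox_fin_num g0 proper (prox k)).
case Psi_u : (Psi u) => [b| |];
  [| by rewrite /= addeNy leNye | by case: proper => /(_ u); rewrite Psi_u].
have jensen : (Psi xavg <= (K%:R^-1 * \sum_(k < K) psi k)%:E)%E.
  by apply: (convex_fun_mean (y := fun k => x k.+1)) => // k; rewrite Psi_psi.
apply: le_trans (leeD2r _ (leeD2l _ jensen)) _.
rewrite -!EFinD lee_fin (mean_subr (fun k => x k.+1)) // dotpZr dotp_sumr.
rewrite -mulrDr -big_split /=.
pose omega k := avg_op Fi (x k) - g_tilde Fxi xi x h lam k.
apply: (mean_telescope_le (a := fun k => dotp (avg_op Fi u) (x k.+1 - u) + psi k)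
  (D := fun k => sqnorm (x k - u)) (s := fun k => sqnorm (omega k))
  (w := fun k => dotp (x k - u) (omega k))) => // k kK.
apply: (prox_step_gap_le g0 l0 gl1 _ (coco _ _ (x_in k kK) u_in)).
exact: (is_prox_ineq g0 cvx (prox k) (Psi_psi k) Psi_u).
Qed.
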